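(* Let $P,Q\in\mathbb{H}[q_1,q_2]$. Then: (1) ${\rm Res}(P,Q;q_1)\equiv 0$ if and only if there exist non-zero $H,K\in\mathbb{H}[q_1,q_2]$, written as polynomials in $q_1$ with coefficients in $\mathbb{H}[q_2]$, with $\deg_{q_1}H<\deg_{q_1}Q$ and $\deg_{q_1}K<\deg_{q_1}P$, such that $P*H+Q*K\equiv 0$; (2) ${\rm Res}(P,Q;q_2)\equiv 0$ if and only if there exist non-zero $\tilde H,\tilde K\in\mathbb{H}[q_1,q_2]$, written as $*$-polynomials in $q_2$ with coefficients in $\mathbb{H}[q_1]$, with $\deg_{q_2}\tilde H<\deg_{q_2}Q$ and $\deg_{q_2}\tilde K<\deg_{q_2}P$, such that $P*\tilde H+Q*\tilde K\equiv 0$.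
   Context: $\mathbb{H}$ denotes the quaternions. A slice regular polynomial in two quaternionic variables is a function $\mathbb{H}^2\to\mathbb{H}$ of the form $P(q_1,q_2)=\sum_{n=0}^{N}\sum_{m=0}^{M}q_1^nq_2^ma_{n,m}$ with $a_{n,m}\in\mathbb{H}$ (coefficients on the right); $\deg_{q_1}P$, $\deg_{q_2}P$ are the degrees in $q_1$, $q_2$. The set of these is $\mathbb{H}[q_1,q_2]$, and $\mathbb{H}[q]$ denotes the analogous one-variable polynomials $\sum q^na_n$. The $*$-product is defined by $\big(\sum q_1^nq_2^ma_{n,m}\big)*\big(\sum q_1^nq_2^mb_{n,m}\big)=\sum_{n,m}q_1^nq_2^m\sum_{r\le n,s\le m}a_{r,s}b_{n-r,m-s}$ (and analogously in one variable); $(\mathbb{H}[q],+,* )$ is a left and right Ore domain and we let $\mathcal{L}$ be its skew field of quotients. Every $P\in\mathbb{H}[q_1,q_2]$ can be written as $P=\sum_{k=0}^{n}q_1^kP_k(q_2)$ with $P_k\in\mathbb{H}[q_2]$, and as $P=\sum_{k=0}^{r}q_2^k*\tilde P_k(q_1)$ with $\tilde P_k\in\mathbb{H}[q_1]$. Dieudonné determinant: for a skew field $(\mathbb F,+,\star)$, let $\overline{\mathbb F}^\star$ be the abelianization of its multiplicative group; ${\rm Det}^\star_N$ is the unique homomorphism $GL(N,\mathbb F)\to\overline{\mathbb F}^\star$ sending ${\rm diag}(\lambda_1,\dots,\lambda_N)$ to the class of $\lambda_1\star\cdots\star\lambda_N$, extended by the value $[0]$ on non-invertible matrices. Here ${\rm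 Det}^*_N$ is this determinant over $\mathcal L$; for a matrix with entries in $\mathbb{H}[q]$ its value has a slice regular polynomial representative, unique up to commutators, with which it is identified. Regular resultants: let $P=\sum_{k=0}^nq_1^kP_k(q_2)$, $Q=\sum_{k=0}^mq_1^kQ_k(q_2)$. The Sylvester matrix $A(q_2)$ is the $(n+m)\times(n+m)$ matrix whose $j$-th column ($1\le j\le m$) has entries $P_0,\dots,P_n$ in rows $j,\dots,j+n$ and zeros elsewhere, and whose $(m+j)$-th column ($1\le j\le n$) has entries $Q_0,\dots,Q_m$ in rows $j,\dots,j+m$ and zeros elsewhere; ${\rm Res}(P,Q;q_1):={\rm Det}^*_{n+m}(A(q_2))$. Likewise, with $P=\sum_{k=0}^rq_2^k*\tilde P_k(q_1)$, $Q=\sum_{k=0}^sq_2^k*\tilde Q_k(q_1)$, $B(q_1)$ is the $(r+s)\times(r+s)$ matrix built in the same way from $\tilde P_0,\dots,\tilde P_r$ (first $s$ columns) and $\tilde Q_0,\dots,\tilde Q_s$ (last $r$ columns), and ${\rm Res}(P,Q;q_2):={\rm Det}^*_{r+s}(B(q_1))$. ''${\rm Res}\equiv0$'' means the determinant is the zero class. *)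

From HB Require Import structures.
From mathcomp Require Import all_boot all_order all_algebra.
From mathcomp Require Import reals.
From mathcomp Require Import ring.
Set Implicit Arguments. Unset Strict Implicit. Unset Printing Implicit Defensive.
Import Order.TTheory GRing.Theory Num.Theory.
Local Open Scope ring_scope.

Section Quaternions.
Variable R : realType.

Record quat := Quat { qre : R; qi : R; qj : R; qk : R }.

Definition quat2tuple (x : quat) := (qre x, qi x, qj x, qk x).
Definition tuple2quat (t : R * R * R * R) := let: (a, b, c, d) := t in Quat a b c d.
Lemma quat2tupleK : cancel quat2tuple tuple2quat. Proof. by case. Qed.

HB.instance Definition _ := Equality.copy quat (can_type quat2tupleK).
HB.instance Definition _ := Choice.copy quat (can_type quat2tupleK).

Definition qzero := Quat 0 0 0 0.
Definition qone := Quat 1 0 0 0.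
Definition qopp x := Quat (- qre x) (- qi x) (- qj x) (- qk x).
Definition qadd x y := Quat (qre x + qre y) (qi x + qi y) (qj x + qj y) (qk x + qk y).
(* Hamilton product: i^2 = j^2 = k^2 = ijk = -1 *)
Definition qmul x y := Quat
  (qre x * qre y - qi x * qi y - qj x * qj y - qk x * qk y)
  (qre x * qi y + qi x * qre y + qj x * qk y - qk x * qj y)
  (qre x * qj y - qi x * qk y + qj x * qre y + qk x * qi y)
  (qre x * qk y + qi x * qj y - qj x * qi y + qk x * qre y).

Lemma qaddA : associative qadd.
Proof. by case=> ????[????][????]; congr Quat => /=; ring. Qed.
Lemma qaddC : commutative qadd.
Proof. by case=> ????[????]; congr Quat => /=; ring. Qed.
Lemma qadd0 : left_id qzero qadd.
Proof. by case=> ????; congr Quat => /=; ring. Qed.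
Lemma qaddN : left_inverse qzero qopp qadd.
Proof. by case=> ????; congr Quat => /=; ring. Qed.
Lemma qmulA : associative qmul.
Proof. by case=> ????[????][????]; congr Quat => /=; ring. Qed.
Lemma qmul1 : left_id qone qmul.
Proof. by case=> ????; congr Quat => /=; ring. Qed.
Lemma qmulr1 : right_id qone qmul.
Proof. by case=> ????; congr Quat => /=; ring. Qed.
Lemma qmulDl : left_distributive qmul qadd.
Proof. by case=> ????[????][????]; congr Quat => /=; ring. Qed.
Lemma qmulDr : right_distributive qmul qadd.
Proof. by case=> ????[????][????]; congr Quat => /=; ring. Qed.
Lemma qone_neq0 : qone != qzero.
Proof. by apply/eqP => -[] /eqP; rewrite oner_eq0. Qed.

HB.instance Definition _ := GRing.isNzRing.Build quat
  qaddA qaddC qadd0 qaddN qmulA qmul1 qmulr1 qmulDl qmulDr qone_neq0.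

End Quaternions.

(* H[q]        = {poly quat R}            (slice regular polynomials, *-product = poly product)
   H[q1,q2]    = {poly {poly quat R}}     (outer variable q1, coefficients P_k(q2) in H[q2];
                                           the *-product is the product of this ring)       *)

Definition deg_q1 (S : nzRingType) (P : {poly {poly S}}) : nat := (size P).-1.
Definition deg_q2 (S : nzRingType) (P : {poly {poly S}}) : nat := (size (swapXY P)).-1.

(* Sylvester matrix of P = sum_k X^k P_k, Q = sum_k X^k Q_k (n = deg P, m = deg Q):
   column j < m carries P_0..P_n in rows j..j+n, column m+j (j < n) carries
   Q_0..Q_m in rows j..j+m (0-indexed). *)
Definition sylvester (S : nzRingType) (P Q : {poly S}) :
  'M[S]_((size P).-1 + (size Q).-1) :=
  \matrix_(i, j)
    if (j < (size Q).-1)%N then (if (j <= i)%N then P`_(i - j) else 0)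
    else (if (j - (size Q).-1 <= i)%N then Q`_(i - (j - (size Q).-1)) else 0).

(* L is (a model of) the skew field of quotients of the Ore domain H[q]:
   a division ring containing H[q] (via iota) in which every element is a
   right quotient a b^-1 and a left quotient b^-1 a of elements of H[q]. *)
Definition skew_field_of_quotients (A : nzRingType) (L : unitRingType)
    (iota : {rmorphism A -> L}) : Prop :=
  [/\ forall x : L, x != 0 -> x \is a GRing.unit,
      injective iota,
      forall x : L, exists a b, b != 0 /\ x = iota a * (iota b)^-1
    & forall x : L, exists a b, b != 0 /\ x = (iota b)^-1 * iota a].

(* Dieudonne determinant Det*_N(M) is the zero class [0] exactly when, by its
   definition, M is not in GL(N, L) (on GL(N,L) it takes values in the
   abelianised multiplicative group, never [0]). *)
Definition dieudonne_det_zero (L : unitRingType) (N : nat) (M : 'M[L]_N) : Prop :=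
  ~ (exists M' : 'M[L]_N, M *m M' = 1%:M /\ M' *m M = 1%:M).

Definition res_q1_zero (S : nzRingType) (L : unitRingType) (iota : {rmorphism {poly S} -> L})
  (P Q : {poly {poly S}}) : Prop :=
  dieudonne_det_zero (map_mx iota (sylvester P Q)).
Definition res_q2_zero (S : nzRingType) (L : unitRingType) (iota : {rmorphism {poly S} -> L})
  (P Q : {poly {poly S}}) : Prop :=
  dieudonne_det_zero (map_mx iota (sylvester (swapXY P) (swapXY Q))).

From HB Require Import structures.
From mathcomp Require Import all_boot all_order all_algebra perm.
From mathcomp Require Import reals zify.
Import GRing.Theory.
Set Implicit Arguments. Unset Strict Implicit. Unset Printing Implicit Defensive.
Local Open Scope ring_scope.

(* Over the skew field L a square matrix that is not invertible, i.e. whose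
   Dieudonne determinant vanishes, has a non-zero right kernel (Gaussian
   elimination through Schur complements).  A kernel vector of the
   Sylvester matrix, rescaled on the right by a common denominator, becomes a
   column of polynomials in q2; and the Sylvester matrix maps the coefficient
   column of (H, K) to the coefficient column of P*H + Q*K.  As H[q2] embeds in L
   it has no zero divisors, hence neither has H[q1,q2], which forces H and K to
   be both non-zero.  The statement in q2 is the statement in q1 for P and Q with
   their variables exchanged by the ring involution swapXY. *)

Section MatricesOverDivisionRing.
Variable L : unitRingType.

Definition invertible_mx n (M : 'M[L]_n) :=
  exists M' : 'M[L]_n, M *m M' = 1%:M /\ M' *m M = 1%:M.

Definition has_kernel n (M : 'M[L]_n) :=
  exists2 v : 'cV[L]_n, v != 0 & M *m v = 0.

Lemma invertible_tperm_mx n (i j : 'I_n) : invertible_mx (tperm_mx i j).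
Proof. by exists (tperm_mx i j); rewrite -perm_mxM tperm2 perm_mx1. Qed.

Lemma invertible_block_lower m n (X : 'M[L]_(n, m)) :
  invertible_mx (block_mx 1%:M 0 X 1%:M).
Proof.
exists (block_mx 1%:M 0 (- X) 1%:M).
by split; rewrite !mulmx_block !(mulmx1, mul1mx, mulmx0, mul0mx) !(addr0, add0r)
  ?subrr ?addNr -scalar_mx_block.
Qed.

Lemma invertible_block_upper m n (Y : 'M[L]_(m, n)) :
  invertible_mx (block_mx 1%:M Y 0 1%:M).
Proof.
exists (block_mx 1%:M (- Y) 0 1%:M).
by split; rewrite !mulmx_block !(mulmx1, mul1mx, mulmx0, mul0mx) !(addr0, add0r)
  ?addNr ?subrr -scalar_mx_block.
Qed.

Lemma invertible_block_diag m n (A : 'M[L]_m) (D : 'M[L]_n) :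
  invertible_mx A -> invertible_mx D -> invertible_mx (block_mx A 0 0 D).
Proof.
move=> [A' [AA' A'A]] [D' [DD' D'D]]; exists (block_mx A' 0 0 D').
by split; rewrite !mulmx_block !(mulmx0, mul0mx) !(addr0, add0r) ?AA' ?DD' ?A'A ?D'D
  -scalar_mx_block.
Qed.

Lemma has_kernel_block_diag m n (A : 'M[L]_m) (D : 'M[L]_n) :
  has_kernel D -> has_kernel (block_mx A 0 0 D).
Proof.
move=> [v v0 Dv]; exists (col_mx 0 v); first by rewrite col_mx_eq0 negb_and v0 orbT.
by rewrite mul_block_col !mulmx0 !mul0mx Dv !addr0 col_mx0.
Qed.

Lemma has_kernel_equiv n (E M F : 'M[L]_n) :
  invertible_mx E -> invertible_mx F -> has_kernel (E *m M *m F) -> has_kernel M.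
Proof.
move=> [E' [_ E'E]] [F' [_ F'F]] [v v0 EMFv]; exists (F *m v).
  by apply: contraNneq v0 => Fv0; rewrite -[v]mul1mx -F'F -mulmxA Fv0 mulmx0.
by rewrite -[M]mul1mx -E'E -!mulmxA !(mulmxA E) (mulmxA (E *m M)) EMFv mulmx0.
Qed.

Lemma invertible_equiv n (E M F : 'M[L]_n) :
  invertible_mx E -> invertible_mx F -> invertible_mx (E *m M *m F) ->
  invertible_mx M.
Proof.
move=> [E' [_ E'E]] [F' [FF' _]] [X [EMFX XEMF]]; exists (F *m X *m E); split.
  have -> : M *m (F *m X *m E) = E' *m (E *m M *m F *m X) *m E.
    by rewrite !mulmxA E'E mul1mx.
  by rewrite EMFX mulmx1 E'E.
have -> : F *m X *m E *m M = F *m (X *m (E *m M *m F)) *m F'.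
  by rewrite !mulmxA -(mulmxA _ F) FF' mulmx1.
by rewrite XEMF mulmx1 FF'.
Qed.

Lemma block_elimination m n (A A' : 'M[L]_m) B C (D : 'M[L]_n) :
  A *m A' = 1%:M -> A' *m A = 1%:M ->
  block_mx 1%:M 0 (- (C *m A')) 1%:M *m block_mx A B C D
    *m block_mx 1%:M (- (A' *m B)) 0 1%:M = block_mx A 0 0 (D - C *m A' *m B).
Proof.
move=> AA' A'A.
rewrite !mulmx_block !(mulmx1, mul1mx, mulmx0, mul0mx) !(addr0, add0r).
have -> : - (C *m A') *m A + C = 0 by rewrite mulNmx -mulmxA A'A mulmx1 addNr.
by rewrite mul0mx add0r mulmxN mulmxA AA' mul1mx addNr mulNmx addrC.
Qed.

Hypothesis unitL : forall x : L, x != 0 -> x \is a GRing.unit.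

Lemma kernel_or_invertible_pivot n (M : 'M[L]_(1 + n)) :
  M 0 0 != 0 -> (forall D : 'M[L]_n, has_kernel D \/ invertible_mx D) ->
  has_kernel M \/ invertible_mx M.
Proof.
move=> M00 IH; have Ma : ulsubmx M = (M 0 0)%:M.
  by rewrite [LHS]mx11_scalar !mxE; congr (M _ _)%:M; apply/val_inj.
set a' := ((M 0 0)^-1)%:M : 'M[L]_1.
have aa' : ulsubmx M *m a' = 1%:M by rewrite Ma -scalar_mxM mulrV ?unitL.
have a'a : a' *m ulsubmx M = 1%:M by rewrite Ma -scalar_mxM mulVr ?unitL.
have := block_elimination (ursubmx M) (dlsubmx M) (drsubmx M) aa' a'a.
rewrite submxK => elim.
have [ker|inv] := IH (drsubmx M - dlsubmx M *m a' *m ursubmx M); [left|right].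
  have := has_kernel_block_diag (ulsubmx M) ker; rewrite -elim.
  by apply: has_kernel_equiv;
    [apply: invertible_block_lower | apply: invertible_block_upper].
have := invertible_block_diag (ex_intro _ a' (conj aa' a'a)) inv; rewrite -elim.
by apply: invertible_equiv;
  [apply: invertible_block_lower | apply: invertible_block_upper].
Qed.

Lemma kernel_or_invertible n (M : 'M[L]_n) : has_kernel M \/ invertible_mx M.
Proof.
elim: n M => [|n IH] M; first by right; exists 0; split; apply/matrixP => -[].
have [/forallP col0 | ] := boolP [forall i, M i 0 == 0].
  left; exists (delta_mx 0 0).
    by apply/eqP => /matrixP/(_ 0 0)/eqP; rewrite !mxE !eqxx oner_eq0.
  by rewrite -colE; apply/matrixP => i j; rewrite !mxE (eqP (col0 i)).
rewrite negb_forall => /existsP [i Mi0].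
have inv1 : invertible_mx (1%:M : 'M[L]_n.+1) by exists 1%:M; rewrite mulmx1.
have := @kernel_or_invertible_pivot n (tperm_mx 0 i *m M).
rewrite -xrowE xrowEsub mxE tpermL -xrowEsub xrowE => /(_ Mi0 IH).
rewrite -[_ *m M]mulmx1 => -[ker | inv]; [left | right].
  exact: has_kernel_equiv (invertible_tperm_mx 0 i) inv1 ker.
exact: invertible_equiv (invertible_tperm_mx 0 i) inv1 inv.
Qed.

End MatricesOverDivisionRing.

Lemma coefM_poly (T : nzRingType) (p : {poly T}) n (f : nat -> T) i :
  (p * \poly_(j < n) f j)`_i = \sum_(j < n) (p * 'X^j)`_i * f j.
Proof.
rewrite poly_def mulr_sumr coef_sum; apply: eq_bigr => j _.
by rewrite -mul_polyC commr_polyXn mulrA coefMC.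
Qed.

Lemma col_poly_split_eq0 (T : nzRingType) m n (f : nat -> T) :
  (\col_(j < n + m) f j == 0) =
  (\poly_(j < m) f j == 0) && (\poly_(j < n) f (j + m)%N == 0).
Proof.
apply/eqP/andP => [/matrixP f0 | [/eqP/polyP H0 /eqP/polyP K0]].
  split; apply/eqP/polyP => j; rewrite coef_poly coef0; case: ltnP => // jlt.
    by have := f0 (Ordinal (ltn_addl n jlt)) 0; rewrite !mxE.
  have jm : (j + m < n + m)%N by rewrite ltn_add2r.
  by have := f0 (Ordinal jm) 0; rewrite !mxE.
apply/matrixP => j k; rewrite !mxE; case: (ltnP j m) => jm.
  by have := H0 j; rewrite coef_poly jm coef0.
have := K0 (j - m)%N; rewrite coef_poly subnK // ltn_subLR //.
by rewrite (addnC m n) ltn_ord coef0.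
Qed.

Lemma col_coef_eq0 (T : nzRingType) (p : {poly T}) k :
  (size p <= k)%N -> (\col_(i < k) p`_i == 0) = (p == 0).
Proof.
move=> sp; apply/eqP/eqP => [/matrixP p0 | ->]; last first.
  by apply/matrixP => i j; rewrite !mxE coef0.
apply/polyP => i; rewrite coef0; case: (ltnP i k) => ik.
  by have := p0 (Ordinal ik) 0; rewrite !mxE.
by rewrite nth_default // (leq_trans sp ik).
Qed.

Lemma ltn_pred_size (T : nzRingType) (p : {poly T}) k :
  p != 0 -> ((size p).-1 < k)%N = (size p <= k)%N.
Proof. by rewrite -size_poly_gt0; case: (size p). Qed.

Lemma col_nat_fun (T : nmodType) k (w : 'cV[T]_k) :
  exists f : nat -> T, w = \col_j f j.
Proof.
exists (fun j => if insub j is Some i then w i 0 else 0).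
by apply/matrixP => i l; rewrite !mxE valK (ord1 l).
Qed.

Section Sylvester.
Variables (T : nzRingType) (P Q : {poly T}).
Local Notation n := (size P).-1.
Local Notation m := (size Q).-1.

Lemma sylvesterE i j :
  sylvester P Q i j = if (j < m)%N then (P * 'X^j)`_i else (Q * 'X^(j - m))`_i.
Proof. by rewrite mxE !coefMXn !ltnNge !if_neg. Qed.

Lemma sylvester_mul_col (f : nat -> T) :
  sylvester P Q *m \col_j f j =
  \col_i (P * \poly_(j < m) f j + Q * \poly_(j < n) f (j + m)%N)`_i.
Proof.
apply/matrixP => i k; rewrite !mxE coefD !coefM_poly.
have -> : \sum_j sylvester P Q i j * (\col_j f j) j k =
    \sum_(0 <= j < n + m)
      (if (j < m)%N then (P * 'X^j)`_i else (Q * 'X^(j - m))`_i) * f j.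
  by rewrite big_mkord; apply: eq_bigr => j _; rewrite sylvesterE !mxE.
rewrite (@big_cat_nat _ _ _ m) ?leq_addl //=; congr (_ + _).
  by rewrite big_mkord; apply: eq_bigr => j _; rewrite ltn_ord.
rewrite -{1}(add0n m) big_addn addnK big_mkord; apply: eq_bigr => j _.
by rewrite ltnNge leq_addl /= addnK.
Qed.

Lemma size_sylvester_combination (f : nat -> T) :
  (size (P * \poly_(j < m) f j + Q * \poly_(j < n) f (j + m)%N)%R <= n + m)%N.
Proof.
apply: leq_trans (size_polyD _ _) _; rewrite geq_max.
have := size_polyMleq P (\poly_(j < m) f j); have := size_poly m f.
have := size_polyMleq Q (\poly_(j < n) f (j + m)%N).
have := size_poly n (fun j => f (j + m)%N).
have := leqSpred (size P); have := leqSpred (size Q).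
lia.
Qed.

Lemma sylvester_mulmx_eq0 (f : nat -> T) :
  (sylvester P Q *m \col_j f j == 0) =
  (P * \poly_(j < m) f j + Q * \poly_(j < n) f (j + m)%N == 0).
Proof. by rewrite sylvester_mul_col col_coef_eq0 // size_sylvester_combination. Qed.

End Sylvester.

Definition low_degree_syzygy (R : nzRingType) (deg : R -> nat) (P Q : R) :=
  exists H K : R, [/\ H != 0, K != 0, (deg H < deg Q)%N, (deg K < deg P)%N
                    & P * H + Q * K = 0].

Lemma low_degree_syzygy_involution (R : nzRingType) (f : {rmorphism R -> R})
    (deg : R -> nat) (P Q : R) :
  involutive f ->
  low_degree_syzygy (fun x => deg (f x)) P Q <-> low_degree_syzygy deg (f P) (f Q).
Proof.
move=> fK; have f_eq0 x : (f x == 0) = (x == 0) by rewrite (inv_eq fK) rmorph0.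
split=> -[H [K [H0 K0 dH dK syz]]].
  exists (f H), (f K); rewrite !f_eq0; split=> //.
  by rewrite -!rmorphM -rmorphD syz rmorph0.
exists (f H), (f K); rewrite !f_eq0 !fK; split=> //.
by apply: (can_inj fK); rewrite rmorphD !rmorphM /= !fK syz rmorph0.
Qed.

Section SylvesterOverQuotientRing.
Variables (S : nzRingType) (L : unitRingType) (iota : {rmorphism {poly S} -> L}).
Hypothesis HL : skew_field_of_quotients iota.

Lemma quotient_unit (x : L) : x != 0 -> x \is a GRing.unit.
Proof. by case: HL => + _ _ _; apply. Qed.

Lemma iota_inj : injective iota.
Proof. by case: HL. Qed.

Lemma iota_eq0 a : (iota a == 0) = (a == 0).
Proof. by rewrite -(rmorph0 iota) (inj_eq iota_inj). Qed.

Lemma map_mx_iota_eq0 k l (w : 'M[{poly S}]_(k, l)) :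
  (map_mx iota w == 0) = (w == 0).
Proof.
apply/eqP/eqP => [/matrixP w0 | ->]; last exact: map_mx0.
by apply/matrixP => i j; have /eqP := w0 i j; rewrite !mxE iota_eq0 => /eqP.
Qed.

Lemma lreg_poly (a : {poly S}) : a != 0 -> GRing.lreg a.
Proof.
move=> a0; apply: mulrI0_lreg => b /(congr1 iota); rewrite rmorphM rmorph0 => /eqP.
by rewrite (mulrI_eq0 _ (mulrI (quotient_unit _))) ?iota_eq0 // => /eqP.
Qed.

Lemma lreg_bipoly (P : {poly {poly S}}) : P != 0 -> GRing.lreg P.
Proof. by move=> P0; apply/lreg_lead/lreg_poly; rewrite lead_coef_eq0. Qed.

Lemma common_right_denominator (s : seq L) :
  exists2 c : L, c \is a GRing.unit & {in s, forall x, exists a, x * c = iota a}.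
Proof.
elim: s => [|x s [c c_unit IH]]; first by exists 1; rewrite ?unitr1.
case: HL => _ _ right_quot _; have [a [b [b0 xc]]] := right_quot (x * c).
have b_unit : iota b \is a GRing.unit by rewrite quotient_unit ?iota_eq0.
exists (c * iota b); first by rewrite unitrMl.
move=> y; rewrite inE => /predU1P[-> | /IH[a' ya']].
  by exists a; rewrite mulrA xc mulrVK.
by exists (a' * b); rewrite mulrA ya' rmorphM.
Qed.

(* Kernel vectors may only be rescaled on the right, hence right quotients. *)
Lemma clear_denominators k (v : 'cV[L]_k) :
  exists2 c : L, c \is a GRing.unit & exists w, map_mx iota w = v *m c%:M.
Proof.
have [c c_unit Hc] := common_right_denominator [seq v i 0 | i <- enum 'I_k].
exists c => //; have /fin_all_exists[w Hw] : forall i, exists a, v i 0 * c = iota a.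
  by move=> i; apply/Hc/mapP; exists i; rewrite ?mem_enum.
exists (\col_i w i); apply/matrixP => i j.
by rewrite (ord1 j) !mxE big_ord1 !mxE mulr1n Hw.
Qed.

Lemma low_degree_syzygy_of_singular (P Q : {poly {poly S}}) :
  P != 0 -> Q != 0 -> res_q1_zero iota P Q -> low_degree_syzygy (@deg_q1 S) P Q.
Proof.
move=> P0 Q0 singular.
have [[v v0 Av] | //] :=
  kernel_or_invertible quotient_unit (map_mx iota (sylvester P Q)).
have [c c_unit [w wE]] := clear_denominators v.
have w0 : w != 0.
  rewrite -map_mx_iota_eq0 wE; apply: contra v0 => /eqP vc0.
  by rewrite -[v]mulmx1 -(mulrV c_unit) scalar_mxM mulmxA vc0 mul0mx.
have Aw : sylvester P Q *m w == 0.
  by rewrite -map_mx_iota_eq0 map_mxM wE mulmxA Av mul0mx.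
have [f wf] := col_nat_fun w; rewrite wf sylvester_mulmx_eq0 in Aw.
move/eqP: Aw; rewrite wf col_poly_split_eq0 negb_and in w0.
set H := \poly_(j < _) f j in w0 *; set K := \poly_(j < _) _ in w0 * => syz.
have H0 : H != 0.
  apply: contraTneq w0 => H0; rewrite H0 eqxx /= negbK.
  move: syz; rewrite H0 mulr0 add0r => /eqP.
  by rewrite mulrI_eq0 //; apply: lreg_bipoly.
have K0 : K != 0.
  apply: contraTneq w0 => K0; rewrite K0 eqxx orbF negbK.
  move: syz; rewrite K0 mulr0 addr0 => /eqP.
  by rewrite mulrI_eq0 //; apply: lreg_bipoly.
by exists H, K; rewrite /deg_q1 !ltn_pred_size ?size_poly.
Qed.

Lemma singular_of_low_degree_syzygy (P Q : {poly {poly S}}) :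
  low_degree_syzygy (@deg_q1 S) P Q -> res_q1_zero iota P Q.
Proof.
move=> [H [K [H0 K0 dH dK syz]]] [M' [_ M'A]].
rewrite /deg_q1 !ltn_pred_size // in dH dK.
pose f j := if (j < (size Q).-1)%N then H`_j else K`_(j - (size Q).-1).
have eH : \poly_(j < (size Q).-1) f j = H.
  apply/polyP => j; rewrite coef_poly /f; case: ltnP => // jm.
  by rewrite nth_default // (leq_trans dH jm).
have eK : \poly_(j < (size P).-1) f (j + (size Q).-1)%N = K.
  apply/polyP => j; rewrite coef_poly /f (ltnNge (j + _)) leq_addl /= addnK.
  by case: ltnP => // jn; rewrite nth_default // (leq_trans dK jn).
have : (\col_j f j : 'cV_((size P).-1 + (size Q).-1)) != 0.
  by rewrite col_poly_split_eq0 eH eK negb_and H0.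
rewrite -map_mx_iota_eq0 -[map_mx _ _]mul1mx -M'A -mulmxA -map_mxM.
have /eqP -> : sylvester P Q *m \col_j f j == 0.
  by rewrite sylvester_mulmx_eq0 eH eK syz.
by rewrite map_mx0 mulmx0 eqxx.
Qed.

Lemma sylvester_singularP (P Q : {poly {poly S}}) :
  P != 0 -> Q != 0 -> res_q1_zero iota P Q <-> low_degree_syzygy (@deg_q1 S) P Q.
Proof.
move=> P0 Q0; split; first exact: low_degree_syzygy_of_singular.
exact: singular_of_low_degree_syzygy.
Qed.

End SylvesterOverQuotientRing.

Theorem lemma4p4 (R : realType) (L : unitRingType)
  (iota : {rmorphism {poly quat R} -> L})
  (HL : skew_field_of_quotients iota)
  (P Q : {poly {poly quat R}}) (P0 : P != 0) (Q0 : Q != 0) :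
  (res_q1_zero iota P Q <->
     exists H K : {poly {poly quat R}}, [/\ H != 0, K != 0,
       (deg_q1 H < deg_q1 Q)%N, (deg_q1 K < deg_q1 P)%N & P * H + Q * K = 0])
  /\
  (res_q2_zero iota P Q <->
     exists H K : {poly {poly quat R}}, [/\ H != 0, K != 0,
       (deg_q2 H < deg_q2 Q)%N, (deg_q2 K < deg_q2 P)%N & P * H + Q * K = 0]).
Proof.
split; first exact: sylvester_singularP.
(* [res_q2_zero] and [deg_q2] are [res_q1_zero] and [deg_q1] after [swapXY]. *)
have swapP0 : swapXY P != 0 by rewrite swapXY_eq0.
have swapQ0 : swapXY Q != 0 by rewrite swapXY_eq0.
apply: iff_trans (sylvester_singularP HL swapP0 swapQ0) _.
exact: iff_sym (low_degree_syzygy_involution _ _ _ swapXYK).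
Qed.
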